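(* Let $\mathcal H=\mathcal H_A\otimes\mathcal H_B$ be finite-dimensional, with local Hamiltonians $H_X(t_i)=\sum_{l_X}E^i_{l_X}\Pi^i_{l_X}$, $H_X(t_f)=\sum_{k_X}E^f_{k_X}\Pi^f_{k_X}$ ($X=A,B$), $\beta>0$, local thermal states $\gamma^X_{\beta,i}=e^{-\beta H_X(t_i)}/\mathcal Z^X_{\beta,i}$, $\gamma^X_{\beta,f}=e^{-\beta H_X(t_f)}/\mathcal Z^X_{\beta,f}$, $\gamma_{\beta,i}=\gamma^A_{\beta,i}\otimes\gamma^B_{\beta,i}$, $\gamma_{\beta,f}=\gamma^A_{\beta,f}\otimes\gamma^B_{\beta,f}$, and $\Delta F=-\beta^{-1}\ln\big(\mathcal Z^A_{\beta,f}\mathcal Z^B_{\beta,f}/(\mathcal Z^A_{\beta,i}\mathcal Z^B_{\beta,i})\big)$. Let $\Phi[X]=\sum_\alpha A_\alpha XA_\alpha^\dagger$ be a CPTP map on $\mathcal H$ with a full-rank fixed point $\pi$, and $\tilde\Phi[X]=\sum_\alpha\tilde A_\alpha X\tilde A_\alpha^\dagger$ with $\tilde A_\alpha=\pi^{1/2}A_\alpha^\dagger\pi^{-1/2}$. Let $\rho_i=\gamma_{\beta,i}+\mathfrak E_{AB}$ and $\tilde\rho_i=\gamma_{\beta,f}+\tilde{\mathfrak E}_{AB}$ be density operators, with $\mathfrak E_{AB},\tilde{\mathfrak E}_{AB}$ Hermitian and having vanishing partial traces over $A$ and over $B$. Write $\mathbf l=(l_A,l_B)$, $\mathbf k=(k_A,k_B)$,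 $\Pi^i_{\mathbf l}=\Pi^i_{l_A}\otimes\Pi^i_{l_B}$, $\Pi^f_{\mathbf k}=\Pi^f_{k_A}\otimes\Pi^f_{k_B}$ and, for an operator $\mathcal A$, $p^i_{\mathbf l}(\mathcal A)=\mathrm{Tr}(\mathcal A\Pi^i_{\mathbf l})$, $p^f_{\mathbf k}(\mathcal A)=\mathrm{Tr}(\Phi[\mathcal A]\Pi^f_{\mathbf k})$, $\tilde p^i_{\mathbf k}(\mathcal A)=\mathrm{Tr}(\mathcal A\Pi^f_{\mathbf k})$, $\tilde p^f_{\mathbf l}(\mathcal A)=\mathrm{Tr}(\tilde\Phi[\mathcal A]\Pi^i_{\mathbf l})$; $P_\Gamma(\mathbf l,\mathbf k)=p^i_{\mathbf l}(\rho_i)p^f_{\mathbf k}(\rho_i)$, $P_{\tilde\Gamma}(\mathbf k,\mathbf l)=\tilde p^i_{\mathbf k}(\tilde\rho_i)\tilde p^f_{\mathbf l}(\tilde\rho_i)$. Define $\Psi^{(i)}_{\mathbf l}=\ln\big(1+\tfrac{p^i_{\mathbf l}(\mathfrak E_{AB})}{p^i_{\mathbf l}(\gamma_{\beta,i})}\big)$, $\Psi^{(f)}_{\mathbf k}=\ln\big(1+\tfrac{p^f_{\mathbf k}(\mathfrak E_{AB})}{p^f_{\mathbf k}(\gamma_{\beta,i})}\big)$, $\tilde\Psi^{(i)}_{\mathbf k}=\ln\big(1+\tfrac{\tilde p^i_{\mathbf k}(\tilde{\mathfrak E}_{AB})}{\tilde p^i_{\mathbf k}(\gamma_{\beta,f})}\big)$,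 $\tilde\Psi^{(f)}_{\mathbf l}=\ln\big(1+\tfrac{\tilde p^f_{\mathbf l}(\tilde{\mathfrak E}_{AB})}{\tilde p^f_{\mathbf l}(\gamma_{\beta,f})}\big)$, $\Delta\Psi_{\mathbf l,\mathbf k}=\Psi^{(i)}_{\mathbf l}+\Psi^{(f)}_{\mathbf k}-\tilde\Psi^{(i)}_{\mathbf k}-\tilde\Psi^{(f)}_{\mathbf l}$ and $\Delta\sigma_{\mathbf l,\mathbf k}=\ln p^f_{\mathbf k}(\gamma_{\beta,i})-\ln\tilde p^f_{\mathbf l}(\gamma_{\beta,f})$. Then, for every $(\mathbf l,\mathbf k)$ for which these quantities are well defined, $$\ln\frac{P_\Gamma(\mathbf l,\mathbf k)}{P_{\tilde\Gamma}(\mathbf k,\mathbf l)}=\beta(\Delta E_{\mathbf l,\mathbf k}-\Delta F)+\Delta\sigma_{\mathbf l,\mathbf k}+\Delta\Psi_{\mathbf l,\mathbf k},\qquad \Delta E_{\mathbf l,\mathbf k}=E^f_{k_A}+E^f_{k_B}-E^i_{l_A}-E^i_{l_B}.$$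
   Context: $\Phi$ and $\tilde\Phi$ are extended linearly to arbitrary (not necessarily positive) operators. *)

From HB Require Import structures.
From mathcomp Require Import all_boot all_order all_algebra.
From mathcomp Require Import complex mxtens.
From mathcomp Require Import reals sequences exp.

Set Implicit Arguments.
Unset Strict Implicit.
Unset Printing Implicit Defensive.

Import Order.TTheory GRing.Theory Num.Theory.
Local Open Scope ring_scope.
Local Open Scope complex_scope.

Section QDefs.
Variable R : realType.
Local Notation C := R[i].

Definition adj {m n} (A : 'M[C]_(m, n)) : 'M[C]_(n, m) :=
  (map_mx (fun z => conjc z) A)^T.

Definition is_hermitian {n} (A : 'M[C]_n) : Prop := adj A = A.

Definition psd {n} (A : 'M[C]_n) : Prop :=
  is_hermitian A /\ forall v : 'cV[C]_n, 0 <= (adj v *m A *m v) 0 0.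

Definition density {n} (A : 'M[C]_n) : Prop := psd A /\ \tr A = 1.

Definition rank_one_resolution {n} (P : 'I_n -> 'M[C]_n) : Prop :=
  [/\ forall l, P l *m P l = P l,
      forall l, is_hermitian (P l),
      forall l m, l != m -> P l *m P m = 0,
      \sum_l P l = 1%:M &
      forall l, \tr (P l) = 1].

Definition hamiltonian {n} (E : 'I_n -> R) (P : 'I_n -> 'M[C]_n) : 'M[C]_n :=
  \sum_l (E l)%:C *: P l.

(* e^{-beta H} for H = sum_l E_l Pi_l (spectral functional calculus) *)
Definition expmH {n} (beta : R) (E : 'I_n -> R) (P : 'I_n -> 'M[C]_n) : 'M[C]_n :=
  \sum_l (expR (- beta * E l))%:C *: P l.

Definition partZ {n} (beta : R) (E : 'I_n -> R) (P : 'I_n -> 'M[C]_n) : R :=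
  complex.Re (\tr (expmH beta E P)).

Definition gibbs {n} (beta : R) (E : 'I_n -> R) (P : 'I_n -> 'M[C]_n) : 'M[C]_n :=
  ((partZ beta E P)^-1)%:C *: expmH beta E P.

Definition ptraceA nA nB (X : 'M[C]_(nA * nB)) : 'M[C]_nB :=
  \matrix_(j, j') \sum_(i < nA) X (mxtens_index (i, j)) (mxtens_index (i, j')).
Definition ptraceB nA nB (X : 'M[C]_(nA * nB)) : 'M[C]_nA :=
  \matrix_(i, i') \sum_(j < nB) X (mxtens_index (i, j)) (mxtens_index (i', j)).

Definition kraus {N K} (A : 'I_K -> 'M[C]_N) (X : 'M[C]_N) : 'M[C]_N :=
  \sum_a A a *m X *m adj (A a).

Definition trace_preserving {N K} (A : 'I_K -> 'M[C]_N) : Prop :=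
  \sum_a adj (A a) *m A a = 1%:M.

(* Petz-type reversed Kraus operators  pi^{1/2} A_a^dagger pi^{-1/2},
   given S = pi^{1/2} *)
Definition rev_kraus {N K} (S : 'M[C]_N) (A : 'I_K -> 'M[C]_N) : 'I_K -> 'M[C]_N :=
  fun a => S *m adj (A a) *m invmx S.

(* real trace Tr(X Y) (used for probabilities, which are real here) *)
Definition trR {N} (X Y : 'M[C]_N) : R := complex.Re (\tr (X *m Y)).

End QDefs.
Arguments ptraceA {R} nA nB X.
Arguments ptraceB {R} nA nB X.

Definition tens {R : pzRingType} {m n} (A : 'M[R]_m) (B : 'M[R]_n) : 'M[R]_(m * n) :=
  tensmx A B.

From HB Require Import structures.
From mathcomp Require Import all_boot all_order all_algebra.
From mathcomp Require Import complex mxtens.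
From mathcomp Require Import reals sequences exp.
From mathcomp Require Import ring.

Set Implicit Arguments.
Unset Strict Implicit.
Unset Printing Implicit Defensive.

Import Order.TTheory GRing.Theory Num.Theory.

Local Open Scope ring_scope.

(* Each probability is linear in the state, so
   each factor of P_Gamma and P_Gamma~ splits as p(gamma) (1 + p(E) / p(gamma)),
   whose logarithm is ln p(gamma) + Psi.  The unevolved p(gamma) are products
   of two Boltzmann weights e^{-beta E} / Z, whose logarithms produce
   beta (Delta E - Delta F); the evolved p_f(gamma_i) and p~_f(gamma_f) are left
   as they are and form Delta sigma. *)

Lemma ReD (T : pzRingType) (x y : complex T) :
  complex.Re (x + y) = complex.Re x + complex.Re y.
Proof. by case: x; case: y. Qed.

Lemma mxtrace_tensmx (T : pzRingType) m n (A : 'M[T]_m) (B : 'M[T]_n) :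
  \tr (tensmx A B) = \tr A * \tr B.
Proof. by rewrite /mxtrace mulr_sum; apply: eq_bigr => k _; rewrite mxE. Qed.

Lemma add_factorE (F : fieldType) (a y : F) : a != 0 -> a + y = a * (1 + y / a).
Proof. by move=> a_neq0; rewrite mulrDr mulr1 mulrCA divff ?mulr1. Qed.

Lemma add_factor_gt0 (F : numFieldType) (a y : F) :
  0 < a -> 0 < 1 + y / a -> 0 < a + y.
Proof. by move=> a_gt0 ya_gt0; rewrite add_factorE ?gt_eqF ?mulr_gt0. Qed.

Lemma ln_add_factor (R : realType) (a y : R) :
  0 < a -> 0 < 1 + y / a -> ln (a + y) = ln a + ln (1 + y / a).
Proof. by move=> a_gt0 ya_gt0; rewrite add_factorE ?gt_eqF // lnM. Qed.

Lemma ln_mul_add_factor (R : realType) (a y b z : R) :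
  0 < a -> 0 < 1 + y / a -> 0 < b -> 0 < 1 + z / b ->
  ln ((a + y) * (b + z)) = ln a + ln b + (ln (1 + y / a) + ln (1 + z / b)).
Proof.
move=> a_gt0 ya_gt0 b_gt0 zb_gt0.
rewrite (lnM (add_factor_gt0 a_gt0 ya_gt0) (add_factor_gt0 b_gt0 zb_gt0)).
by rewrite (ln_add_factor a_gt0 ya_gt0) (ln_add_factor b_gt0 zb_gt0) addrACA.
Qed.

Section FluctuationAlgebra.
Variable R : realType.
Local Notation C := (complex R).

Lemma krausD N K (A : 'I_K -> 'M[C]_N) (X Y : 'M[C]_N) :
  kraus A (X + Y) = kraus A X + kraus A Y.
Proof.
by rewrite /kraus -big_split; apply: eq_bigr => a _; rewrite mulmxDr mulmxDl.
Qed.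

Lemma trRDl N (X Y P : 'M[C]_N) : trR (X + Y) P = trR X P + trR Y P.
Proof. by rewrite /trR mulmxDl mxtraceD ReD. Qed.

Definition boltzmann_weight {n} (beta : R) (E : 'I_n -> R) (P : 'I_n -> 'M[C]_n)
    (l : 'I_n) : R :=
  (partZ beta E P)^-1 * expR (- beta * E l).

Section RankOneResolution.
Variables (n : nat) (beta : R) (E : 'I_n -> R) (P : 'I_n -> 'M[C]_n).
Hypothesis resP : rank_one_resolution P.

Lemma partZE : partZ beta E P = \sum_l expR (- beta * E l).
Proof.
case: resP => _ _ _ _ trP.
rewrite /partZ /expmH (big_morph _ (@mxtraceD _ _) (mxtrace0 _ _)).
under eq_bigr => l _ do rewrite mxtraceZ trP mulr1.
by rewrite -rmorph_sum.
Qed.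

Lemma partZ_gt0 (l : 'I_n) : 0 < partZ beta E P.
Proof.
rewrite partZE (bigD1 l) //= ltr_wpDr ?expR_gt0 //.
by apply: sumr_ge0 => j _; apply: expR_ge0.
Qed.

Lemma boltzmann_weight_gt0 (l : 'I_n) : 0 < boltzmann_weight beta E P l.
Proof. by rewrite mulr_gt0 ?invr_gt0 ?expR_gt0 ?(partZ_gt0 l). Qed.

Lemma ln_boltzmann_weight (l : 'I_n) :
  ln (boltzmann_weight beta E P l) = - beta * E l - ln (partZ beta E P).
Proof.
rewrite lnM ?posrE ?invr_gt0 ?expR_gt0 ?(partZ_gt0 l) //.
by rewrite lnV ?posrE ?(partZ_gt0 l) // expRK addrC.
Qed.

Lemma mxtrace_gibbs_proj (l : 'I_n) :
  \tr (gibbs beta E P *m P l) = (boltzmann_weight beta E P l)%:C%C.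
Proof.
case: resP => idemP _ orthP _ trP.
rewrite /gibbs /expmH -scalemxAl mulmx_suml (bigD1 l) //= big1 => [|j jl].
  by rewrite addr0 -scalemxAl idemP !mxtraceZ trP mulr1 rmorphM.
by rewrite -scalemxAl orthP ?scaler0.
Qed.

End RankOneResolution.

Section GibbsProduct.
Variables (nA nB : nat) (beta : R).
Variables (EA : 'I_nA -> R) (PA : 'I_nA -> 'M[C]_nA).
Variables (EB : 'I_nB -> R) (PB : 'I_nB -> 'M[C]_nB).
Variables (lA : 'I_nA) (lB : 'I_nB).
Hypotheses (resA : rank_one_resolution PA) (resB : rank_one_resolution PB).

Lemma trR_gibbs_tens :
  trR (tens (gibbs beta EA PA) (gibbs beta EB PB)) (tens (PA lA) (PB lB)) =
  boltzmann_weight beta EA PA lA * boltzmann_weight beta EB PB lB.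
Proof.
rewrite /trR /tens tensmx_mul mxtrace_tensmx.
by rewrite !mxtrace_gibbs_proj // -rmorphM.
Qed.

Lemma trR_gibbs_tens_gt0 :
  0 < trR (tens (gibbs beta EA PA) (gibbs beta EB PB)) (tens (PA lA) (PB lB)).
Proof. by rewrite trR_gibbs_tens mulr_gt0 ?boltzmann_weight_gt0. Qed.

Lemma ln_trR_gibbs_tens :
  ln (trR (tens (gibbs beta EA PA) (gibbs beta EB PB)) (tens (PA lA) (PB lB))) =
  - beta * (EA lA + EB lB) - ln (partZ beta EA PA * partZ beta EB PB).
Proof.
have [wA wB] := (boltzmann_weight_gt0 beta EA resA lA,
                 boltzmann_weight_gt0 beta EB resB lB).
have [ZA ZB] := (partZ_gt0 beta EA resA lA, partZ_gt0 beta EB resB lB).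
rewrite trR_gibbs_tens (lnM wA wB) !ln_boltzmann_weight // (lnM ZA ZB).
by rewrite mulrDr opprD addrACA.
Qed.

End GibbsProduct.

End FluctuationAlgebra.

Theorem mainTheorem6 (R : realType) (nA nB : nat)
  (EiA : 'I_nA -> R) (PiA : 'I_nA -> 'M[complex R]_nA)
  (EfA : 'I_nA -> R) (PfA : 'I_nA -> 'M[complex R]_nA)
  (EiB : 'I_nB -> R) (PiB : 'I_nB -> 'M[complex R]_nB)
  (EfB : 'I_nB -> R) (PfB : 'I_nB -> 'M[complex R]_nB)
  (beta : R) (K : nat) (Ak : 'I_K -> 'M[complex R]_(nA * nB))
  (pi S : 'M[complex R]_(nA * nB)) (Eab Etab : 'M[complex R]_(nA * nB))
  (lA : 'I_nA) (lB : 'I_nB) (kA : 'I_nA) (kB : 'I_nB) :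
  rank_one_resolution PiA -> rank_one_resolution PfA ->
  rank_one_resolution PiB -> rank_one_resolution PfB ->
  0 < beta ->
  (* Phi is CPTP (Kraus form) with a full-rank fixed point pi *)
  trace_preserving Ak ->
  density pi -> pi \in unitmx -> kraus Ak pi = pi ->
  (* S = pi^{1/2} (the positive square root) *)
  psd S -> S *m S = pi ->
  (* correlation terms *)
  is_hermitian Eab -> ptraceA nA nB Eab = 0 -> ptraceB nA nB Eab = 0 ->
  is_hermitian Etab -> ptraceA nA nB Etab = 0 -> ptraceB nA nB Etab = 0 ->
  let gi := tens (gibbs beta EiA PiA) (gibbs beta EiB PiB) in
  let gf := tens (gibbs beta EfA PfA) (gibbs beta EfB PfB) in
  let rho := gi + Eab in
  let rhot := gf + Etab in
  density rho -> density rhot ->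
  let Pl := tens (PiA lA) (PiB lB) in
  let Pk := tens (PfA kA) (PfB kB) in
  let Phi := kraus Ak in
  let Phit := kraus (rev_kraus S Ak) in
  let p_i := fun X => trR X Pl in
  let p_f := fun X => trR (Phi X) Pk in
  let pt_i := fun X => trR X Pk in
  let pt_f := fun X => trR (Phit X) Pl in
  let PG := p_i rho * p_f rho in
  let PGt := pt_i rhot * pt_f rhot in
  let DeltaF := - beta^-1 * ln ((partZ beta EfA PfA * partZ beta EfB PfB) /
                                (partZ beta EiA PiA * partZ beta EiB PiB)) in
  let Psi_i := ln (1 + p_i Eab / p_i gi) in
  let Psi_f := ln (1 + p_f Eab / p_f gi) in
  let Psit_i := ln (1 + pt_i Etab / pt_i gf) in
  let Psit_f := ln (1 + pt_f Etab / pt_f gf) in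
  let DeltaPsi := Psi_i + Psi_f - Psit_i - Psit_f in
  let Deltasigma := ln (p_f gi) - ln (pt_f gf) in
  let DeltaE := EfA kA + EfB kB - EiA lA - EiB lB in
  (* well-definedness of all quantities for this (l, k) *)
  p_i gi != 0 -> 0 < p_f gi -> pt_i gf != 0 -> 0 < pt_f gf ->
  0 < 1 + p_i Eab / p_i gi -> 0 < 1 + p_f Eab / p_f gi ->
  0 < 1 + pt_i Etab / pt_i gf -> 0 < 1 + pt_f Etab / pt_f gf ->
  PGt != 0 -> 0 < PG / PGt ->
  ln (PG / PGt) = beta * (DeltaE - DeltaF) + Deltasigma + DeltaPsi.
Proof.
move=> riA rfA riB rfB beta_gt0 _ _ _ _ _ _ _ _ _ _ _ _ gi gf rho rhot _ _
  Pl Pk Phi Phit p_i p_f pt_i pt_f PG PGt DeltaF Psi_i Psi_f Psit_i Psit_f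
  DeltaPsi Deltasigma DeltaE _ pf_gt0 _ ptf_gt0 Psii_gt0 Psif_gt0
  Psiti_gt0 Psitf_gt0 _ _.
have pi_gt0 : 0 < p_i gi by exact: trR_gibbs_tens_gt0.
have pti_gt0 : 0 < pt_i gf by exact: trR_gibbs_tens_gt0.
have pi_rho : p_i rho = p_i gi + p_i Eab by exact: trRDl.
have pf_rho : p_f rho = p_f gi + p_f Eab by rewrite /p_f /Phi krausD trRDl.
have pti_rhot : pt_i rhot = pt_i gf + pt_i Etab by exact: trRDl.
have ptf_rhot : pt_f rhot = pt_f gf + pt_f Etab.
  by rewrite /pt_f /Phit krausD trRDl.
have PG_gt0 : 0 < PG.
  rewrite /PG pi_rho pf_rho.
  by rewrite mulr_gt0 ?(add_factor_gt0 pi_gt0) ?(add_factor_gt0 pf_gt0).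
have PGt_gt0 : 0 < PGt.
  rewrite /PGt pti_rhot ptf_rhot.
  by rewrite mulr_gt0 ?(add_factor_gt0 pti_gt0) ?(add_factor_gt0 ptf_gt0).
have Zi_gt0 := mulr_gt0 (partZ_gt0 beta EiA riA lA) (partZ_gt0 beta EiB riB lB).
have Zf_gt0 := mulr_gt0 (partZ_gt0 beta EfA rfA kA) (partZ_gt0 beta EfB rfB kB).
have ln_pi : ln (p_i gi) = - beta * (EiA lA + EiB lB) -
                           ln (partZ beta EiA PiA * partZ beta EiB PiB).
  exact: ln_trR_gibbs_tens.
have ln_pti : ln (pt_i gf) = - beta * (EfA kA + EfB kB) -
                             ln (partZ beta EfA PfA * partZ beta EfB PfB).
  exact: ln_trR_gibbs_tens.
rewrite (ln_div PG_gt0 PGt_gt0) /PG /PGt pi_rho pf_rho pti_rhot ptf_rhot.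
rewrite (ln_mul_add_factor pi_gt0 Psii_gt0 pf_gt0 Psif_gt0).
rewrite (ln_mul_add_factor pti_gt0 Psiti_gt0 ptf_gt0 Psitf_gt0).
rewrite -/Psi_i -/Psi_f -/Psit_i -/Psit_f ln_pi ln_pti.
rewrite /DeltaF (ln_div Zf_gt0 Zi_gt0) /DeltaPsi /Deltasigma /DeltaE.
by field; rewrite gt_eqF.
Qed.
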